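(* Let $p>q>0$ be coprime integers and represent the lens space $L_{p,q}$ as the union of two solid tori glued along their common boundary torus $T$. Fix any basis of $\pi_1(T)=H_1(T;\mathbb Z)=\mathbb Z^2$, and let $r_1,r_2\in\mathbb Q\cup\{\infty\}$ be the slopes of the meridians $\mu_1,\mu_2$ of the two solid tori. Then $d_c(r_1,r_2)=E(p,q)-1$.
   Context: The slope of a primitive class $(m,n)\in\mathbb Z^2$ is $m/n\in\mathbb Q\cup\{\infty\}$. Hyperbolic plane is the upper half-plane with absolute $\mathbb R\cup\{\infty\}$; the Farey tesselation consists of the geodesics joining $m/n$ and $m'/n'$ ($\infty=1/0$) with $|mn'-nm'|=1$. For distinct rational (or infinite) absolute points $r_1,r_2$, $d_c(r_1,r_2)$ is the number of Farey lines intersecting the geodesic from $r_1$ to $r_2$ (lines merely sharing an ideal endpoint do not count). For coprime positive integers $p,q$, $E(p,q)$ is the number of subtractions in the subtractive Euclid algorithm converting $(p,q)$ into $(0,1)$, i.e. the sum of the partial quotients of the continued fraction of $p/q$. *)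

From mathcomp Require Import all_boot all_order all_algebra.
Set Implicit Arguments. Unset Strict Implicit. Unset Printing Implicit Defensive.
Import Order.TTheory GRing.Theory Num.Theory.
Local Open Scope ring_scope.

(* Points of the absolute R ∪ {∞} that we need: Q ∪ {∞}, encoded as
   [Some x] for x : rat and [None] for ∞. *)
Notation extQ := (option rat).

Definition slope (m n : int) : extQ :=
  if n == 0 then None else Some ((m%:~R : rat) / n%:~R).

(* the order of Q ∪ {∞} seen as the real line with ∞ on top;
   cutting the circle R ∪ {∞} at ∞ *)
Definition ext_lt (x y : extQ) : bool :=
  match x, y with
  | Some a, Some b => a < b
  | Some _, None => true
  | None, _ => false
  end.

(* Farey adjacency |m n' - n m'| = 1 for reduced fractions m/n, m'/n'
   (∞ = 1/0). *)
Definition farey_adj (x y : extQ) : bool :=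
  match x, y with
  | Some a, Some b => `|numq a * denq b - denq a * numq b| == 1
  | Some a, None => `|denq a| == 1
  | None, Some b => `|denq b| == 1
  | None, None => false
  end.

(* A Farey line, represented by its endpoints (x,y) with x < y. *)
Definition farey_line (e : extQ * extQ) : bool :=
  ext_lt e.1 e.2 && farey_adj e.1 e.2.

(* The geodesic with endpoints lo < hi and the geodesic with endpoints x < y
   intersect (in the interior of the hyperbolic plane) iff the endpoints
   strictly interleave on the circle R ∪ {∞}; sharing an endpoint does
   not count. *)
Definition interleave (lo hi x y : extQ) : bool :=
  (ext_lt lo x && ext_lt x hi && ext_lt hi y)
  || (ext_lt x lo && ext_lt lo y && ext_lt y hi).

Definition crosses (r1 r2 : extQ) (e : extQ * extQ) : bool :=
  let lo := if ext_lt r1 r2 then r1 else r2 in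
  let hi := if ext_lt r1 r2 then r2 else r1 in
  farey_line e && interleave lo hi e.1 e.2.

Definition dc_eq (r1 r2 : extQ) (n : nat) : Prop :=
  exists s : seq (extQ * extQ),
    [/\ uniq s, (forall e, crosses r1 r2 e = (e \in s)) & size s = n].

(* Subtractive Euclid algorithm: number of subtractions turning (p,q)
   into (0,1); [fuel] is a termination bound. *)
Fixpoint Esub (fuel p q : nat) : nat :=
  match fuel with
  | 0 => 0
  | f.+1 =>
    if p == 0%N then 0
    else if (q <= p)%N then (Esub f (p - q) q).+1
    else (Esub f p (q - p)).+1
  end.

Definition E (p q : nat) : nat := Esub (p + q) p q.

From mathcomp Require Import all_boot all_order all_algebra.
From mathcomp Require Import zify ring lra.
Import Order.TTheory GRing.Theory Num.Theory.
Local Open Scope ring_scope.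

(* A unimodular integral matrix acts on Q ∪ {∞} by a Möbius map that preserves
   Farey adjacency and the sign of cross-ratios; since two geodesics cross exactly
   when the cross-ratio of their endpoints is negative, d_c is invariant under this
   action.  Changing basis to (μ1, λ1) moves μ1 to ∞ and μ2 to q/p.  The Farey
   lines crossing the geodesic from ∞ to q/p are the edges of the Stern-Brocot
   tree whose interval contains q/p, except the root edge 0-∞; descending the tree
   towards q/p is the subtractive Euclid algorithm, one edge per subtraction, so
   there are E(p, q) - 1 of them. *)

Definition det (z t : int * int) : int := z.1 * t.2 - z.2 * t.1.

Definition coords (x : extQ) : int * int :=
  if x is Some a then (numq a, denq a) else (1, 0).

Definition slopev (z : int * int) : extQ := slope z.1 z.2.

Definition pdet (x y : extQ) : int := det (coords x) (coords y).

Lemma pdetC x y : pdet y x = - pdet x y.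
Proof. by rewrite /pdet /det; ring. Qed.

Lemma pdetxx x : pdet x x = 0.
Proof. by rewrite /pdet /det; ring. Qed.

Lemma ext_ltE x y : ext_lt x y = (pdet x y < 0).
Proof.
case: x => [a|]; case: y => [b|] //=; rewrite /pdet /det /=.
- by rewrite -[a < b]/(lt_rat a b) lt_ratE subr_lt0 [denq a * _]mulrC.
- by have := denq_gt0 a; lia.
- by have := denq_gt0 b; lia.
Qed.

Lemma farey_adjE x y : farey_adj x y = (`|pdet x y| == 1).
Proof.
by case: x => [a|]; case: y => [b|] //=; rewrite /pdet /det /=; congr (_ == 1); lia.
Qed.

Lemma ext_lt_total x y : [\/ ext_lt x y, x = y | ext_lt y x].
Proof.
case: x => [a|]; case: y => [b|] /=; try by constructor.
by case: (ltgtP a b) => [||->]; constructor.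
Qed.

Definition squash (x : extQ) : rat := if x is Some a then a / (1 + `|a|) else 1.

Lemma ext_lt_squash x y : ext_lt x y = (squash x < squash y).
Proof.
have pos (a : rat) : 0 < 1 + `|a| by rewrite ltr_wpDr.
have lt1 (a : rat) : a / (1 + `|a|) < 1.
  rewrite ltr_pdivrMr // mul1r.
  by case: (lerP 0 a) => ha; [rewrite ger0_norm|rewrite ltr0_norm]; lra.
case: x => [a|]; case: y => [b|] /=; [|by rewrite lt1|by rewrite ltNge ltW|by []].
rewrite ltr_pdivrMr // mulrAC ltr_pdivlMr //.
by case: (lerP 0 a) => ha; case: (lerP 0 b) => hb;
  rewrite ?(ger0_norm ha) ?(ger0_norm hb) ?(ltr0_norm ha) ?(ltr0_norm hb);
  apply/idP/idP => h; nra.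
Qed.

Lemma sgz_pdet x y : sgz (pdet x y) = sgz (squash x - squash y).
Proof.
case: (ext_lt_total x y) => [lt_xy|<-|lt_yx].
- rewrite ltr0_sgz -?ext_ltE //.
  by rewrite ltr0_sgz // subr_lt0 -ext_lt_squash.
- by rewrite pdetxx subrr !sgz0.
- rewrite gtr0_sgz; last by rewrite pdetC oppr_gt0 -ext_ltE.
  by rewrite gtr0_sgz // subr_gt0 -ext_lt_squash.
Qed.

Lemma interleave_sgz (L H X Y : rat) : X < Y -> L <= H ->
  (L < X) && (X < H) && (H < Y) || (X < L) && (L < Y) && (Y < H) =
  (sgz (L - X) * sgz (H - Y) * (sgz (L - Y) * sgz (H - X)) < 0).
Proof.
have sgzB (a b : rat) : sgz (a - b) = if a < b then -1 else if b < a then 1 else 0.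
  case: (ltgtP a b) => h; last by rewrite h subrr.
  - by rewrite ltr0_sgz ?subr_lt0.
  - by rewrite gtr0_sgz ?subr_gt0.
move=> lt_XY le_LH; rewrite !sgzB.
by case: (ltgtP L X) => ?; case: (ltgtP H Y) => ?; case: (ltgtP L Y) => ?;
  case: (ltgtP H X) => ? //=; exfalso; lra.
Qed.

(* has the sign of the cross-ratio [r1, r2; x, y] *)
Definition xratio (r1 r2 x y : extQ) : int :=
  pdet r1 x * pdet r2 y * (pdet r1 y * pdet r2 x).

Lemma crossesE r1 r2 x y : crosses r1 r2 (x, y) =
  [&& ext_lt x y, `|pdet x y| == 1 & xratio r1 r2 x y < 0].
Proof.
rewrite /crosses /farey_line /= farey_adjE; case lt_xy: (ext_lt x y) => //=.
congr (_ && _); rewrite -sgz_lt0 !sgzM !sgz_pdet /interleave !ext_lt_squash.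
rewrite ext_lt_squash in lt_xy.
case: ifP => lt12; first by rewrite interleave_sgz // ltW.
by rewrite interleave_sgz ?leNgt ?lt12 //; congr (_ < 0); ring.
Qed.

Definition sort2 (x y : extQ) : extQ * extQ := if ext_lt x y then (x, y) else (y, x).

Lemma sort2C x y : sort2 x y = sort2 y x.
Proof.
have asym u v : ext_lt u v -> ext_lt v u = false.
  by rewrite !ext_ltE pdetC oppr_lt0 => /lt_gtF.
rewrite /sort2; case: (ext_lt_total x y) => [lt_xy|->|lt_yx] //.
- by rewrite lt_xy asym.
- by rewrite lt_yx asym.
Qed.

Lemma sort2_map (f : extQ -> extQ) x y :
  sort2 (f (sort2 x y).1) (f (sort2 x y).2) = sort2 (f x) (f y).
Proof. by rewrite [sort2 x y]/sort2; case: ifP => // _; apply: sort2C. Qed.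

Lemma crosses_sorted r1 r2 e : crosses r1 r2 e -> sort2 e.1 e.2 = e.
Proof. by case: e => x y /andP [/andP [/= lt_xy _] _]; rewrite /sort2 lt_xy. Qed.

Lemma crosses_sort2 r1 r2 x y :
  crosses r1 r2 (sort2 x y) = (`|pdet x y| == 1) && (xratio r1 r2 x y < 0).
Proof.
have xratioC : xratio r1 r2 y x = xratio r1 r2 x y by rewrite /xratio; ring.
rewrite /sort2; case: ifP => [lt_xy|nlt_xy]; rewrite crossesE ?lt_xy //.
rewrite pdetC normrN xratioC; case: (ext_lt_total x y) => [lt_xy|<-|-> //].
- by rewrite lt_xy in nlt_xy.
- by rewrite pdetxx normr0 andbF.
Qed.

Lemma dc_eq_transport (f g : extQ -> extQ) r1 r2 n :
  cancel f g -> cancel g f ->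
  (forall x y, crosses (f r1) (f r2) (sort2 (f x) (f y)) = crosses r1 r2 (sort2 x y)) ->
  dc_eq r1 r2 n -> dc_eq (f r1) (f r2) n.
Proof.
move=> fK gK crossesF [s [uniq_s crosses_s size_s]].
pose F e := sort2 (f e.1) (f e.2); pose G e := sort2 (g e.1) (g e.2).
have GFK e : crosses r1 r2 e -> G (F e) = e.
  by move=> /crosses_sorted {2}<-; rewrite /G sort2_map !fK.
have FGK e : crosses (f r1) (f r2) e -> F (G e) = e.
  by move=> /crosses_sorted {2}<-; rewrite /F sort2_map !gK.
exists (map F s); split; last by rewrite size_map.
- rewrite map_inj_in_uniq // => e e' se se' eqF.
  by rewrite -(GFK e) ?crosses_s // eqF GFK ?crosses_s.
- move=> e; apply/idP/mapP => [cr_e | [e' se' ->]].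
  + exists (G e); last by rewrite FGK.
    have sortG : sort2 (G e).1 (G e).2 = G e by exact: (sort2_map id).
    by rewrite -crosses_s -sortG -crossesF -/(F (G e)) FGK.
  + have cr_e' : crosses r1 r2 e' by rewrite crosses_s.
    by rewrite /F crossesF (crosses_sorted _ _ _ cr_e').
Qed.

Definition scalev (s : int) (z : int * int) : int * int := (s * z.1, s * z.2).

Lemma scale1v z : scalev 1 z = z.
Proof. by case: z => z1 z2; rewrite /scalev !mul1r. Qed.

Lemma det_scalev s s' z t : det (scalev s z) (scalev s' t) = s * s' * det z t.
Proof. by rewrite /det /scalev /=; ring. Qed.

Lemma norm_sqr_eq1 (s : int) : s ^+ 2 = 1 -> `|s| = 1.
Proof. by move/eqP; rewrite sqrf_eq1 => /orP [] /eqP ->. Qed.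

Lemma coprimez_detP z : reflect (exists t, det z t = 1) (coprimez z.1 z.2).
Proof.
apply: (iffP (coprimezP _ _)) => [[[u v] /= uv1] | [[t1 t2] zt1]].
- by exists (- v, u); rewrite /det /= -uv1; ring.
- by exists (t2, - t1); rewrite /= -zt1 /det /=; ring.
Qed.

Lemma coprimez_coords x : coprimez (coords x).1 (coords x).2.
Proof. by case: x => [a|] //=; rewrite coprimezE coprime_num_den. Qed.

Lemma slopev_coords x : slopev (coords x) = x.
Proof.
by case: x => [a|] //; rewrite /slopev /slope /= (negbTE (denq_neq0 a)) divq_num_den.
Qed.

Lemma slopev_scalev s z : s != 0 -> slopev (scalev s z) = slopev z.
Proof.
move=> s_neq0; rewrite /slopev /slope /= mulf_eq0 (negbTE s_neq0) /=.
case: eqP => // _; congr Some.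
by rewrite !intrM -mulf_div divff ?mul1r // intr_eq0.
Qed.

Definition sgv (z : int * int) : int := sgz (if z.2 == 0 then z.1 else z.2).

Lemma coords_slopev z : coprimez z.1 z.2 -> coords (slopev z) = scalev (sgv z) z.
Proof.
case: z => z1 z2; rewrite /slopev /slope /sgv /scalev coprimezE /=.
case: eqP => [-> | /eqP z2_neq0 co].
  by rewrite /coprime gcdn0 mulr0 => /eqP z1_1; rewrite -abszEsg z1_1.
rewrite /= coprimeq_num // coprimeq_den // (negbTE z2_neq0).
case: (ltrgt0P z2) z2_neq0 => h // _.
- by rewrite gtr0_sg // gtr0_sgz // ?gtr0_norm // !mul1r.
- by rewrite ltr0_sg // ltr0_sgz // ?ltr0_norm // !mulN1r.
Qed.

Lemma sgv_sqr z : coprimez z.1 z.2 -> sgv z ^+ 2 = 1.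
Proof.
move=> co; have z_neq0 : (if z.2 == 0 then z.1 else z.2) != 0.
  case: (z.2 =P 0) co => [z2_0|/eqP //]; rewrite coprimezE z2_0 /coprime gcdn0.
  by apply: contraTneq => ->.
by rewrite /sgv expr2 mulz_sg z_neq0.
Qed.

Section Mobius.

Variables a b c d : int.

Definition act (z : int * int) : int * int := (z.1 * a + z.2 * c, z.1 * b + z.2 * d).

Definition mob (x : extQ) : extQ := slopev (act (coords x)).

Lemma det_act z t : det (act z) (act t) = (a * d - b * c) * det z t.
Proof. by rewrite /det /act /=; ring. Qed.

Lemma act_scalev s z : act (scalev s z) = scalev s (act z).
Proof. by rewrite /act /scalev /=; congr (_, _); ring. Qed.

Hypothesis unimodular : (a * d - b * c) ^+ 2 = 1.

Lemma coprimez_act z : coprimez z.1 z.2 -> coprimez (act z).1 (act z).2.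
Proof.
move=> /coprimez_detP [t zt1]; apply/coprimez_detP.
exists (scalev (a * d - b * c) (act t)).
by rewrite -(scale1v (act z)) det_scalev det_act zt1 mulr1 mul1r -expr2.
Qed.

Lemma coords_mob x : coords (mob x) = scalev (sgv (act (coords x))) (act (coords x)).
Proof. exact/coords_slopev/coprimez_act/coprimez_coords. Qed.

Lemma sgv_act_sqr x : sgv (act (coords x)) ^+ 2 = 1.
Proof. exact/sgv_sqr/coprimez_act/coprimez_coords. Qed.

Lemma pdet_mob x y : pdet (mob x) (mob y) =
  sgv (act (coords x)) * sgv (act (coords y)) * (a * d - b * c) * pdet x y.
Proof. by rewrite /pdet !coords_mob det_scalev det_act mulrA. Qed.

Lemma norm_pdet_mob x y : `|pdet (mob x) (mob y)| = `|pdet x y|.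
Proof.
rewrite pdet_mob !normrM (norm_sqr_eq1 _ (sgv_act_sqr x)).
by rewrite (norm_sqr_eq1 _ (sgv_act_sqr y)) (norm_sqr_eq1 _ unimodular) !mul1r.
Qed.

Lemma xratio_mob r1 r2 x y : xratio (mob r1) (mob r2) (mob x) (mob y) = xratio r1 r2 x y.
Proof.
transitivity (sgv (act (coords r1)) ^+ 2 * sgv (act (coords r2)) ^+ 2 *
  sgv (act (coords x)) ^+ 2 * sgv (act (coords y)) ^+ 2 * ((a * d - b * c) ^+ 2) ^+ 2 *
  xratio r1 r2 x y).
  by rewrite /xratio !pdet_mob; ring.
by rewrite !sgv_act_sqr unimodular expr1n !mul1r.
Qed.

Lemma crosses_mob r1 r2 x y :
  crosses (mob r1) (mob r2) (sort2 (mob x) (mob y)) = crosses r1 r2 (sort2 x y).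
Proof. by rewrite !crosses_sort2 norm_pdet_mob xratio_mob. Qed.

End Mobius.

Lemma mobK a b c d a' b' c' d' : (a * d - b * c) ^+ 2 = 1 ->
  (forall z, act a' b' c' d' (act a b c d z) = z) -> cancel (mob a b c d) (mob a' b' c' d').
Proof.
move=> unimodular actK x.
have sq1 : sgv (act a b c d (coords x)) ^+ 2 = 1 by exact: sgv_act_sqr.
rewrite /mob coords_mob // act_scalev actK slopev_scalev ?slopev_coords //.
by apply/eqP => s0; move: sq1; rewrite s0 expr0n.
Qed.

Lemma dc_eq_mob a b c d r1 r2 n : (a * d - b * c) ^+ 2 = 1 ->
  dc_eq r1 r2 n -> dc_eq (mob a b c d r1) (mob a b c d r2) n.
Proof.
move=> unimodular.
(* D = D^-1, so the inverse matrix is D times the adjugate *)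
pose D := a * d - b * c.
have inv_unimodular : (D * d * (D * a) - - (D * b) * - (D * c)) ^+ 2 = 1.
  by rewrite -[RHS](expr1n _ 3) -unimodular /D; ring.
have act_inv z : act (D * d) (- (D * b)) (- (D * c)) (D * a) (act a b c d z) = z.
  by rewrite -[RHS]scale1v -unimodular /act /scalev /D /=; congr (_, _); ring.
have inv_act z : act a b c d (act (D * d) (- (D * b)) (- (D * c)) (D * a) z) = z.
  by rewrite -[RHS]scale1v -unimodular /act /scalev /D /=; congr (_, _); ring.
apply: dc_eq_transport; [exact: mobK act_inv | exact: mobK inv_act | exact: crosses_mob].
Qed.

Definition emap {A B : Type} (f : A -> B) (e : A * A) : B * B := (f e.1, f e.2).

Lemma emapK {A : Type} {f g : A -> A} : cancel f g -> cancel (emap f) (emap g).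
Proof. by move=> fK [x y]; rewrite /emap /= !fK. Qed.

Lemma mem_map_emap {T : eqType} {f g : T -> T} : cancel f g -> cancel g f ->
  forall s e, (e \in map (emap f) s) = (emap g e \in s).
Proof. by move=> fK gK s e; rewrite -{1}(emapK gK e) (mem_map (can_inj (emapK fK))). Qed.

Definition nonneg (z : int * int) : bool := (0 <= z.1) && (0 <= z.2).

(* [e.1 < e.2] are Farey neighbours and the slope of [w] lies strictly between them *)
Definition spans (w : int * int) (e : (int * int) * (int * int)) : bool :=
  [&& det e.1 e.2 == -1, 0 < det e.2 w & 0 < det w e.1].

Definition straddles (w : int * int) (e : (int * int) * (int * int)) : bool :=
  [&& 0 < e.1.2, 0 < e.2.2 & spans w e].

Definition sb_edge (w : int * int) (e : (int * int) * (int * int)) : bool :=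
  [&& nonneg e.1, nonneg e.2 & spans w e].

Lemma crosses_infty r x y :
  crosses None r (x, y) = straddles (coords r) (emap coords (x, y)).
Proof.
rewrite /crosses /interleave /farey_line /= andbF /= !ext_ltE farey_adjE.
rewrite /straddles /spans /pdet /emap /det /=.
have den_ge0 : 0 <= (coords y).2 by case: y => [b|] //=; apply: ltW.
case: x => [a|] /=; last by lia.
by have := denq_gt0 a; lia.
Qed.

Definition sb_root : (int * int) * (int * int) := ((0, 1), (1, 0)).

(* x |-> x / (1 + x) and x |-> x + 1 in coordinates, and their inverses *)
Definition lft (z : int * int) : int * int := (z.1, z.1 + z.2).
Definition unlft (z : int * int) : int * int := (z.1, z.2 - z.1).
Definition rgt (z : int * int) : int * int := (z.1 + z.2, z.2).
Definition unrgt (z : int * int) : int * int := (z.1 - z.2, z.2).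

Lemma lftK : cancel lft unlft.
Proof. by case=> z1 z2; rewrite /lft /unlft /=; congr (_, _); ring. Qed.
Lemma unlftK : cancel unlft lft.
Proof. by case=> z1 z2; rewrite /lft /unlft /=; congr (_, _); ring. Qed.
Lemma rgtK : cancel rgt unrgt.
Proof. by case=> z1 z2; rewrite /rgt /unrgt /=; congr (_, _); ring. Qed.
Lemma unrgtK : cancel unrgt rgt.
Proof. by case=> z1 z2; rewrite /rgt /unrgt /=; congr (_, _); ring. Qed.

(* The Stern-Brocot edges whose interval contains Q/P, in the order in which the
   subtractive Euclid algorithm on (P, Q) meets them: [lft] and [rgt] map the whole
   tree onto its left and right subtrees. *)
Fixpoint sb_edges (fuel P Q : nat) : seq ((int * int) * (int * int)) :=
  match fuel with
  | 0 => [::]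
  | f.+1 =>
    if P == 0%N then [::]
    else if (Q <= P)%N then sb_root :: map (emap lft) (sb_edges f (P - Q) Q)
    else sb_root :: map (emap rgt) (sb_edges f P (Q - P))
  end.

Lemma size_sb_edges f P Q : size (sb_edges f P Q) = Esub f P Q.
Proof.
elim: f P Q => [|f IH] P Q //=.
by case: eqP => // _; case: ifP => _ /=; rewrite size_map IH.
Qed.

Lemma sb_edge_left (Q P : int) e : Q <= P -> sb_edge (Q, P) e -> e != sb_root ->
  nonneg (unlft e.1) && nonneg (unlft e.2).
Proof.
case: e => [[u1 u2] [v1 v2]] le_QP; rewrite /sb_edge /spans /nonneg /det /=.
set m := v1 * P - v2 * Q; set n := Q * u2 - P * u1.
case/and3P => /andP [u1_ge0 u2_ge0] /andP [v1_ge0 v2_ge0] /and3P [/eqP det_uv m_gt0 n_gt0].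
move=> not_root.
have eQ : Q = m * u1 + n * v1.
  have : Q * (u1 * v2 - u2 * v1) = - (m * u1 + n * v1) by rewrite /m /n; ring.
  by rewrite det_uv; lia.
have eP : P = m * u2 + n * v2.
  have : P * (u1 * v2 - u2 * v1) = - (m * u2 + n * v2) by rewrite /m /n; ring.
  by rewrite det_uv; lia.
have le_v : v1 <= v2.
  case: (lerP v1 v2) => // lt_v; exfalso; case: (lerP u2 u1) => le_u; first by nia.
  by move: not_root; rewrite /sb_root !xpair_eqE; nia.
have le_u : u1 <= u2 by nia.
lia.
Qed.

Lemma spans_unlft w e : spans (unlft w) (emap unlft e) = spans w e.
Proof.
have det_unlft z t : det (unlft z) (unlft t) = det z t by rewrite /det /=; ring.
by rewrite /spans /= !det_unlft.
Qed.

Lemma sb_edge_unlft (Q P : int) e : Q <= P ->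
  sb_edge (unlft (Q, P)) (emap unlft e) = sb_edge (Q, P) e && (e != sb_root).
Proof.
move=> le_QP; rewrite /sb_edge spans_unlft.
apply/idP/idP => [/and3P [nu nv sp] | /andP [sb not_root]].
- rewrite sp andbT; apply/andP; split.
    by move: nu nv; rewrite /nonneg /=; lia.
  by apply: contraTneq nv => ->.
- have /andP [nu nv] := sb_edge_left _ _ _ le_QP sb not_root.
  by case/and3P: sb => _ _ ->; rewrite nu nv.
Qed.

Definition swap (z : int * int) : int * int := (z.2, z.1).
Definition eswap (e : (int * int) * (int * int)) := (swap e.2, swap e.1).

Lemma eswapK : involutive eswap.
Proof. by case=> [[u1 u2] [v1 v2]]. Qed.

Lemma sb_edge_swap w e : sb_edge (swap w) (eswap e) = sb_edge w e.
Proof.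
have det_swap z t : det (swap z) (swap t) = det t z by rewrite /det /=; ring.
have nonneg_swap z : nonneg (swap z) = nonneg z by rewrite /nonneg andbC.
have spans_swap : spans (swap w) (eswap e) = spans w e.
  by rewrite /spans /= !det_swap [_ && (0 < _)]andbC.
by rewrite /sb_edge spans_swap /= !nonneg_swap andbA [nonneg _ && _]andbC -andbA.
Qed.

Lemma sb_edge_unrgt (Q P : int) e : P <= Q ->
  sb_edge (unrgt (Q, P)) (emap unrgt e) = sb_edge (Q, P) e && (e != sb_root).
Proof.
move=> le_PQ; have -> : emap unrgt e = eswap (emap unlft (eswap e)).
  by case: e => [[u1 u2] [v1 v2]].
rewrite -[unrgt _]/(swap (unlft (P, Q))) sb_edge_swap sb_edge_unlft //.
by rewrite -[(P, Q)]/(swap (Q, P)) sb_edge_swap -[in e != _](eswapK e) (inv_eq eswapK).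
Qed.

Lemma sb_edge_subl (P Q : nat) e : (Q <= P)%N ->
  sb_edge (Q%:Z, (P - Q)%N%:Z) (emap unlft e) = sb_edge (Q%:Z, P%:Z) e && (e != sb_root).
Proof. by move=> le_QP; rewrite -subzn // sb_edge_unlft. Qed.

Lemma sb_edge_subr (P Q : nat) e : (P <= Q)%N ->
  sb_edge ((Q - P)%N%:Z, P%:Z) (emap unrgt e) = sb_edge (Q%:Z, P%:Z) e && (e != sb_root).
Proof. by move=> le_PQ; rewrite -subzn // sb_edge_unrgt. Qed.

Lemma mem_sb_edges f P Q e : (0 < Q)%N -> (P + Q <= f)%N ->
  (e \in sb_edges f P Q) = sb_edge (Q%:Z, P%:Z) e.
Proof.
elim: f P Q e => [|f IH] P Q e Q_gt0 le_f /=; first by lia.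
case: eqP => [P0|/eqP P_neq0].
  rewrite P0 in_nil /sb_edge /spans /nonneg /det /=.
  by case: e => [[u1 u2] [v1 v2]] /=; nia.
have root_sb : sb_edge (Q%:Z, P%:Z) sb_root by rewrite /sb_edge /spans /nonneg /det /=; lia.
case: ifP => [le_QP|/negbT lt_PQ]; rewrite in_cons.
- rewrite (mem_map_emap lftK unlftK) IH ?sb_edge_subl //; try lia.
  by case: eqVneq => [->|_]; rewrite ?root_sb ?andbT.
- rewrite (mem_map_emap rgtK unrgtK) IH ?sb_edge_subr //; try lia.
  by case: eqVneq => [->|_]; rewrite ?root_sb ?andbT.
Qed.

Lemma uniq_sb_edges f P Q : (0 < Q)%N -> (P + Q <= f)%N -> uniq (sb_edges f P Q).
Proof.
elim: f P Q => [|f IH] P Q Q_gt0 le_f //=.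
case: eqP => // /eqP P_neq0; case: ifP => [le_QP|/negbT lt_PQ] /=.
- rewrite (map_inj_uniq (can_inj (emapK lftK))) (mem_map_emap lftK unlftK).
  by rewrite IH ?mem_sb_edges ?sb_edge_subl ?eqxx ?andbF //; lia.
- rewrite (map_inj_uniq (can_inj (emapK rgtK))) (mem_map_emap rgtK unrgtK).
  by rewrite IH ?mem_sb_edges ?sb_edge_subr ?eqxx ?andbF //; lia.
Qed.

Lemma straddles_sb_edge (Q P : int) e : 0 < Q -> Q < P ->
  straddles (Q, P) e = sb_edge (Q, P) e && (e != sb_root).
Proof.
move=> Q_gt0 lt_QP; apply/idP/idP => [|/andP [sb not_root]].
- case: e => [[u1 u2] [v1 v2]]; rewrite /straddles /sb_edge /spans /nonneg /sb_root /det /=.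
  rewrite !xpair_eqE; nia.
- have /andP [] := sb_edge_left _ _ _ (ltW lt_QP) sb not_root.
  move: sb; case: e {not_root} => [[u1 u2] [v1 v2]].
  by rewrite /straddles /sb_edge /spans /nonneg /det /=; nia.
Qed.

Lemma coords_slopev_pos z : coprimez z.1 z.2 -> 0 < z.2 -> coords (slopev z) = z.
Proof.
by move=> co z2_gt0; rewrite coords_slopev // /sgv gt_eqF // gtr0_sgz // scale1v.
Qed.

Lemma straddles_coordsK w e : straddles w e -> emap coords (emap slopev e) = e.
Proof.
case: e => u v /and3P [/= u2_gt0 v2_gt0 /and3P [/eqP det_uv _ _]].
rewrite /emap /= !coords_slopev_pos //; apply/coprimez_detP.
- by exists u; apply: oppr_inj; rewrite -det_uv /det; ring.
- by exists (scalev (-1) v); rewrite -(scale1v u) det_scalev det_uv; ring.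
Qed.

Lemma dc_eq_infty p q : (0 < q)%N -> (q < p)%N -> coprime p q ->
  dc_eq None (slope q%:Z p%:Z) (E p q - 1).
Proof.
move=> q_gt0 lt_qp co_pq; set w := (q%:Z, p%:Z).
have coords_w : coords (slope q p) = w.
  by apply: (coords_slopev_pos (q%:Z, p%:Z)) => /=; [rewrite coprimezE coprime_sym | lia].
have [t sbE] : exists t, sb_edges (p + q) p q = sb_root :: t.
  have -> : (p + q = (p + q).-1.+1)%N by lia.
  by rewrite /= ifN ?ifT; [eexists | lia | lia].
have := uniq_sb_edges _ _ _ q_gt0 (leqnn (p + q)); rewrite sbE => /andP [root_notin uniq_t].
have mem_t e : (e \in t) = straddles w e.
  rewrite straddles_sb_edge -?(mem_sb_edges (p + q)) ?sbE ?in_cons //; try lia.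
  by case: (eqVneq e sb_root) => [->|_]; rewrite ?(negbTE root_notin) ?andbT.
exists (map (emap slopev) t); split.
- rewrite map_inj_in_uniq // => e e' te te' eq_e.
  by rewrite -(straddles_coordsK w e) ?eq_e ?(straddles_coordsK w) -?mem_t.
- case=> x y; rewrite crosses_infty coords_w -mem_t.
  apply/idP/mapP => [t_xy | [e te ->]]; last by rewrite (straddles_coordsK w) -?mem_t.
  by exists (emap coords (x, y)) => //; rewrite /emap /= !slopev_coords.
- by rewrite size_map subn1 /E -(size_sb_edges (p + q)) sbE.
Qed.

Theorem theorem17 (p q : nat) (a b c d : int) :
  (0 < q)%N -> (q < p)%N -> coprime p q ->
  (a * d - b * c = 1 \/ a * d - b * c = -1) ->
  dc_eq (slope a b) (slope (q%:Z * a + p%:Z * c) (q%:Z * b + p%:Z * d))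
        (E p q - 1).
Proof.
move=> q_gt0 lt_qp co_pq unimodular.
have unimodular2 : (a * d - b * c) ^+ 2 = 1 by case: unimodular => ->.
have -> : slope a b = mob a b c d None by rewrite /mob /slopev /act /= !mul1r !mul0r !addr0.
have coprime_qp : coprimez q p by rewrite coprimezE coprime_sym.
have -> : slope (q%:Z * a + p%:Z * c) (q%:Z * b + p%:Z * d) = mob a b c d (slope q p).
  by rewrite /mob (coords_slopev_pos (q%:Z, p%:Z)) //=; lia.
by apply: dc_eq_mob => //; apply: dc_eq_infty.
Qed.
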